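(* If a perfect 2-D $(u\times v,4,2)$-OOC exists (equivalently, a strictly $v$-cyclic $SQS(u\times v)$), then $uv\equiv 2,4\pmod 6$ and $u(uv-1)(uv-2)\equiv 0\pmod{24}$. Equivalently, one of the following holds: (1) $u\equiv 1,5\pmod{12}$ and $v\equiv 2,10\pmod{24}$; (2) $u\equiv 7,11\pmod{12}$ and $v\equiv 14,22\pmod{24}$; (3) $u\equiv 2,4\pmod 6$ and $v\equiv 1,5\pmod 6$; (4) $u\equiv 4,8\pmod{12}$ and $v\equiv 2,4\pmod 6$.
   Context: A 2-D $(u\times v,4,2)$-OOC is a family $\mathcal C$ of $u\times v$ $(0,1)$-matrices of Hamming weight $4$ such that for all $A=(a_{ij}),B=(b_{ij})\in\mathcal C$ and every integer $r$ with $A\ne B$ or $r\not\equiv0\pmod v$, $\sum_{i,j}a_{ij}b_{i,j+r}\le 2$ (column indices mod $v$). It is perfect if, identifying each matrix with its support in $I_u\times Z_v$ ($I_u=\{0,\dots,u-1\}$), the supports of all $v$ cyclic column shifts of all codewords cover every $3$-subset of $I_u\times Z_v$ exactly once; equivalently its size is $u(uv-1)(uv-2)/24$. This is the same as a strictly $v$-cyclic Steiner quadruple system $SQS(u\times v)$ on $I_u\times Z_v$ (a set of $4$-subsets, closed under $(i,x)\mapsto(i,x+1)$, covering every $3$-subset exactly once, with each block having trivial stabilizer in $Z_v$). *)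

From mathcomp Require Import all_boot.
Set Implicit Arguments. Unset Strict Implicit. Unset Printing Implicit Defensive.

Lemma addmod_lt (v : nat) (j : 'I_v) (r : nat) : (j + r) %% v < v.
Proof. by apply: ltn_pmod; apply: leq_ltn_trans (ltn_ord j). Qed.

Definition zadd (v : nat) (j r : 'I_v) : 'I_v := Ordinal (addmod_lt j r).

(* A codeword of a 2-D (u x v,4,2)-OOC is identified with its support,
   a subset of I_u x Z_v. *)
Definition point (u v : nat) := ('I_u * 'I_v)%type.

Definition shiftset (u v : nat) (A : {set point u v}) (r : 'I_v) : {set point u v} :=
  [set (x.1, zadd x.2 r) | x in A].

(* correlation  sum_{i,j} a_{ij} b_{i,j+r} *)
Definition corr (u v : nat) (A B : {set point u v}) (r : 'I_v) : nat :=
  #|[set x in A | (x.1, zadd x.2 r) \in B]|.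

Definition is_OOC (u v : nat) (C : {set {set point u v}}) : Prop :=
  (forall A, A \in C -> #|A| = 4) /\
  (forall A B (r : 'I_v), A \in C -> B \in C ->
     (A != B) || (nat_of_ord r != 0) -> corr A B r <= 2).

Definition is_perfect_OOC (u v : nat) (C : {set {set point u v}}) : Prop :=
  is_OOC C /\
  forall T : {set point u v}, #|T| = 3 ->
    #|[set p : {set point u v} * 'I_v | (p.1 \in C) && (T \subset shiftset p.1 p.2)]| = 1.

(* A perfect OOC C yields a Steiner quadruple system on the u*v points of
   I_u x Z_v: the blocks are the v column shifts of the codewords, every
   block has 4 points, and every 3-subset lies in exactly one block.
   The classical double counting for such a system, developed below for an
   arbitrary finite family of 4-element blocks, shows with n = u*v points
     n - 2 = 2 r2,   (n - 1)(n - 2) = 6 r1,   n (n - 1)(n - 2) = 24 #blocks,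
   where r2 (r1) counts the blocks through two (one) given points.  As
   there are #|C| * v blocks, cancelling v gives u (n-1)(n-2) = 24 #|C|.
   These three divisibilities only depend on u and v modulo 24, and a
   finite check over the 24 x 24 residue pairs turns them into the stated
   congruences on u*v and the four admissible residue classes of (u, v). *)

From mathcomp Require Import all_boot.
Set Implicit Arguments. Unset Strict Implicit. Unset Printing Implicit Defensive.

Lemma zadd_inj (v : nat) (r : 'I_v) : injective (fun j => zadd j r).
Proof.
move=> j k /(congr1 val) /= /eqP; rewrite eqn_modDr !modn_small // => /eqP.
exact: val_inj.
Qed.

Lemma card_shiftset (u v : nat) (A : {set point u v}) (r : 'I_v) :
  #|shiftset A r| = #|A|.
Proof.
rewrite card_imset // => [[i j] [i' j']] /= [-> ejj'].
by congr pair; apply: (@zadd_inj _ r); apply: val_inj.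
Qed.

Lemma card_point (u v : nat) : #|{: point u v}| = u * v.
Proof. by rewrite card_prod !card_ord. Qed.

Lemma double_count (T I : finType) (q : pred I) (blk : I -> {set T})
    (Y : {set T}) :
  \sum_(y in Y) #|[set p | q p && (y \in blk p)]| = \sum_(p | q p) #|blk p :&: Y|.
Proof.
under eq_bigr do rewrite -sum1_card big_mkcond /=.
rewrite exchange_big /= [RHS]big_mkcond /=; apply: eq_bigr => p _.
under eq_bigr do rewrite inE.
case: (q p) => /=; last by rewrite big1.
rewrite -sum1_card big_mkcond [RHS]big_mkcond /=; apply: eq_bigr => y _.
by rewrite !inE; case: (y \in blk p); case: (y \in Y).
Qed.

Section SteinerQuadrupleSystem.

Variables (T I : finType) (inC : pred I) (blk : I -> {set T}).

Hypothesis blk_card : forall p, inC p -> #|blk p| = 4.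
Hypothesis blk_triple : forall x y z, x != y -> x != z -> y != z ->
  #|[set p | inC p && (x \in blk p) && (y \in blk p) && (z \in blk p)]| = 1.

Lemma sqs_pair_count (x y : T) : x != y ->
  #|T| - 2 = 2 * #|[set p | inC p && (x \in blk p) && (y \in blk p)]|.
Proof.
move=> xy.
have := double_count (fun p => inC p && (x \in blk p) && (y \in blk p)) blk
  (~: [set x; y]).
rewrite (eq_bigr (fun _ => 1)); last first.
  by move=> z; rewrite !inE negb_or => /andP [zx zy]; rewrite blk_triple // eq_sym.
rewrite [X in _ = X -> _](eq_bigr (fun _ => 2)); last first.
  move=> p /andP [/andP [Cp xp] yp].
  rewrite -setDE cardsD blk_card // (setIidPr _) ?cards2 ?xy //.
  by rewrite subUset !sub1set xp yp.
rewrite !sum_nat_const muln1 cardsCs setCK cards2 xy => ->.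
by rewrite mulnC; congr (_ * _); apply: eq_card => p; rewrite inE.
Qed.

Lemma sqs_point_count (x : T) :
  (#|T| - 1) * (#|T| - 2) = 6 * #|[set p | inC p && (x \in blk p)]|.
Proof.
have := double_count (fun p => inC p && (x \in blk p)) blk (~: [set x]).
rewrite [X in _ = X -> _](eq_bigr (fun _ => 3)); last first.
  move=> p /andP [Cp xp].
  by rewrite -setDE cardsD blk_card // (setIidPr _) ?cards1 // sub1set.
rewrite sum_nat_const => pairs.
have <- : 2 * \sum_(y in ~: [set x])
    #|[set p | inC p && (x \in blk p) && (y \in blk p)]| = (#|T| - 1) * (#|T| - 2).
  rewrite big_distrr /= (eq_bigr (fun _ => #|T| - 2)); last first.
    by move=> y; rewrite !inE => yx; rewrite (@sqs_pair_count x y) // eq_sym.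
  by rewrite sum_nat_const cardsCs setCK cards1.
rewrite pairs (mulnC _ 3) mulnA; congr (_ * _).
by apply: eq_card => p; rewrite inE.
Qed.

Lemma sqs_block_count :
  #|T| * ((#|T| - 1) * (#|T| - 2)) = 24 * #|inC|.
Proof.
have := double_count inC blk setT.
rewrite [X in _ = X -> _](eq_bigr (fun _ => 4)); last first.
  by move=> p Cp; rewrite setIT blk_card.
rewrite sum_nat_const => points.
have <- : 6 * \sum_(y in setT) #|[set p | inC p && (y \in blk p)]|
    = #|T| * ((#|T| - 1) * (#|T| - 2)).
  rewrite big_distrr /= (eq_bigr (fun _ => (#|T| - 1) * (#|T| - 2))).
    by rewrite sum_nat_const cardsT.
  by move=> y _; rewrite (sqs_point_count y).
by rewrite points (mulnC _ 4) mulnA.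
Qed.

End SteinerQuadrupleSystem.

Section PerfectOOC.

Variables (u v : nat) (C : {set {set point u v}}).
Hypothesis hC : is_perfect_OOC C.

Definition shifted_codeword (p : {set point u v} * 'I_v) := shiftset p.1 p.2.

Lemma shifted_codeword_card p : p.1 \in C -> #|shifted_codeword p| = 4.
Proof. by case: hC => [[card4 _] _] Cp; rewrite card_shiftset card4. Qed.

Lemma shifted_codeword_triple (x y z : point u v) :
  x != y -> x != z -> y != z ->
  #|[set p | (p.1 \in C) && (x \in shifted_codeword p)
     && (y \in shifted_codeword p) && (z \in shifted_codeword p)]| = 1.
Proof.
move=> xy xz yz; case: hC => _ /(_ [set x; y; z]) unique_block.
rewrite -[RHS]unique_block; last first.
  by rewrite -setUA cardsU1 cards2 yz !inE negb_or xy xz.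
by apply: eq_card => p; rewrite !inE !subUset !sub1set !andbA.
Qed.

Lemma perfect_OOC_count (hv : 0 < v) :
  u * ((u * v - 1) * (u * v - 2)) = 24 * #|C|.
Proof.
have := sqs_block_count shifted_codeword_card shifted_codeword_triple.
have -> : #|[pred p : {set point u v} * 'I_v | p.1 \in C]| = #|C| * v.
  transitivity #|setX C [set: 'I_v]|; last by rewrite cardsX cardsT card_ord.
  by apply: eq_card => p; rewrite !inE andbT.
rewrite card_point => count; apply/eqP.
by rewrite -(eqn_pmul2r hv) mulnAC count mulnA.
Qed.

End PerfectOOC.

Definition admissible_residues (a b : nat) : bool :=
  [|| (a %% 12 \in [:: 1; 5]) && (b %% 24 \in [:: 2; 10]),
      (a %% 12 \in [:: 7; 11]) && (b %% 24 \in [:: 14; 22]),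
      (a %% 6 \in [:: 2; 4]) && (b %% 6 \in [:: 1; 5])
    | (a %% 12 \in [:: 4; 8]) && (b %% 6 \in [:: 2; 4])].

(* The counting divisibilities read modulo 24, where m stands for uv - 2. *)
Definition sqs_divisibility (a b : nat) : bool :=
  let m := (a * b + 22) %% 24 in
  [&& 2 %| m, 6 %| (m + 1) * m & 24 %| a * ((m + 1) * m)].

Lemma sqs_residue_table :
  all (fun a => all (fun b => sqs_divisibility a b ==>
    ((a * b) %% 6 \in [:: 2; 4]) && admissible_residues a b) (iota 0 24))
    (iota 0 24).
Proof. by vm_compute. Qed.

Lemma dvdn_mod24 (d x : nat) : d %| 24 -> (d %| x %% 24) = (d %| x).
Proof. by move=> d24; rewrite /dvdn (modn_dvdm x d24). Qed.

Lemma admissible_residues_mod24 (a b : nat) :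
  admissible_residues (a %% 24) (b %% 24) = admissible_residues a b.
Proof. by rewrite /admissible_residues !modn_dvdm. Qed.

Lemma sqs_divisibility_mod24 (u v : nat) : 2 <= u * v ->
  2 %| u * v - 2 -> 6 %| (u * v - 1) * (u * v - 2) ->
  24 %| u * ((u * v - 1) * (u * v - 2)) -> sqs_divisibility (u %% 24) (v %% 24).
Proof.
move=> uv_ge2; have -> : u * v - 1 = (u * v - 2).+1 by rewrite -subSn.
set m := u * v - 2 => m2 m6 m24.
have m_mod : (u %% 24 * (v %% 24) + 22) %% 24 = m %% 24.
  by rewrite -modnDml modnMm -(subnK uv_ge2) -/m modnDml -addnA modnDr.
have prod_mod : (m %% 24 + 1) * (m %% 24) = m.+1 * m %[mod 24].
  by rewrite -modnMm modnDml modn_mod modnMm addn1.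
rewrite /sqs_divisibility m_mod dvdn_mod24 // m2 -dvdn_mod24 // prod_mod.
rewrite dvdn_mod24 // m6 -dvdn_mod24 // -modnMm prod_mod modnMm modnMml.
by rewrite dvdn_mod24.
Qed.

Lemma sqs_residue_conditions (u v : nat) : 2 <= u * v ->
  2 %| u * v - 2 -> 6 %| (u * v - 1) * (u * v - 2) ->
  24 %| u * ((u * v - 1) * (u * v - 2)) ->
  ((u * v) %% 6 \in [:: 2; 4]) && admissible_residues u v.
Proof.
move=> uv_ge2 m2 m6 m24.
have := sqs_divisibility_mod24 uv_ge2 m2 m6 m24.
have /allP/(_ (u %% 24)) := sqs_residue_table.
rewrite mem_iota ltn_mod => /(_ isT)/allP/(_ (v %% 24)).
rewrite mem_iota ltn_mod => /(_ isT)/implyP table /table.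
by rewrite admissible_residues_mod24 -modnMm !modn_dvdm // modnMm.
Qed.

Theorem lemma3p5 (u v : nat) (hu : 0 < u) (hv : 0 < v) (huv : 2 <= u * v)
  (C : {set {set point u v}}) (hC : is_perfect_OOC C) :
  ((u * v) %% 6 \in [:: 2; 4]) /\ (24 %| u * (u * v - 1) * (u * v - 2)) /\
  [\/ (u %% 12 \in [:: 1; 5]) /\ (v %% 24 \in [:: 2; 10]),
      (u %% 12 \in [:: 7; 11]) /\ (v %% 24 \in [:: 14; 22]),
      (u %% 6 \in [:: 2; 4]) /\ (v %% 6 \in [:: 1; 5])
    | (u %% 12 \in [:: 4; 8]) /\ (v %% 6 \in [:: 2; 4])].
Proof.
have [x [y [_ _ xy]]] : exists x y : point u v, [/\ x \in setT, y \in setT & x != y].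
  by apply/card_gt1P; rewrite cardsT card_point.
have card4 := shifted_codeword_card hC; have triple := shifted_codeword_triple hC.
have m2 : 2 %| u * v - 2.
  by rewrite -[u * v]card_point (sqs_pair_count card4 triple xy) dvdn_mulr.
have m6 : 6 %| (u * v - 1) * (u * v - 2).
  by rewrite -[u * v]card_point (sqs_point_count card4 triple x) dvdn_mulr.
have m24 : 24 %| u * ((u * v - 1) * (u * v - 2)).
  by rewrite (perfect_OOC_count hC hv) dvdn_mulr.
have /andP [uv6 residues] := sqs_residue_conditions huv m2 m6 m24.
split=> //; split; first by rewrite -mulnA.
by case/or4P: residues => /andP [? ?];
  [constructor 1 | constructor 2 | constructor 3 | constructor 4].
Qed.
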